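(* Assume that $K\subset\mathbb{R}^d$ is a convex parameter space with finite diameter, and that $V\subset K$ is a measurable set satisfying $\lim_{\epsilon\to0}\mathrm{vol}(V_\epsilon)<\mathrm{vol}(K)$. Then for any bounded function $f:K\to\mathbb{R}$, the restricted Cheeger constant $\mathcal{C}_f(V)$ is strictly positive.
   Context: $\mathrm{vol}$ is Lebesgue (Borel) measure; $V_\epsilon=\{x\in K:\inf_{y\in V}\|x-y\|_2\le\epsilon\}$. $\mu_f$ is the probability measure on $K$ with density $e^{-f(x)}/\int_Ke^{-f(y)}dy$; for $V\subset K$, $\mathcal{C}_f(V):=\liminf_{\epsilon\searrow0}\inf_{A\subset V}\frac{\mu_f(A_\epsilon)-\mu_f(A)}{\epsilon\,\mu_f(A)}$, where $A_\epsilon=\{x\in K:\inf_{y\in A}\|x-y\|_2\le\epsilon\}$. *)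

From mathcomp Require Import all_boot all_order all_algebra.
From mathcomp Require Import all_classical all_reals all_analysis.
Set Implicit Arguments. Unset Strict Implicit. Unset Printing Implicit Defensive.
Import Order.TTheory GRing.Theory Num.Theory.
Import numFieldNormedType.Exports.
Local Open Scope classical_set_scope.
Local Open Scope ring_scope.

Section Defs.
Variables (R : realType) (d : nat).
Notation Rd := 'rV[R]_d.

Definition norm2 (x : Rd) : R := Num.sqrt (\sum_(i < d) (x 0 i) ^+ 2).
Definition dist2 (x y : Rd) : R := norm2 (x - y).

Definition box (ab : option (Rd * Rd)) : set Rd :=
  match ab with
  | None => set0
  | Some (a, b) => [set x | forall i : 'I_d, a 0 i <= x 0 i <= b 0 i]
  end.
Definition boxvol (ab : option (Rd * Rd)) : R :=
  match ab with
  | None => 0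
  | Some (a, b) => \prod_(i < d) Num.max 0 (b 0 i - a 0 i)
  end.

(* d-dimensional Lebesgue (outer) measure: infimum of total volumes of
   countable box covers.  On Lebesgue measurable sets this is vol. *)
Definition vol (A : set Rd) : \bar R :=
  ereal_inf [set (\sum_(0 <= n <oo) (boxvol (c n))%:E)%E
            | c in [set c : nat -> option (Rd * Rd) |
                    A `<=` \bigcup_n box (c n)]].

Definition Lmeasurable (A : set Rd) : Prop := vol.-caratheodory A.

(* Integral of exp(-f) over A w.r.t. vol, by the layer-cake formula
   \int_A g dvol = \int_0^oo vol({x in A | g x > t}) dt  (g >= 0). *)
Definition int_expmf (f : Rd -> R) (A : set Rd) : \bar R :=
  (\int[@lebesgue_measure R]_(t in `[0%R, +oo[%classic)
      vol [set x | A x /\ (t < expR (- f x))%R])%E.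

Definition mu_f (K : set Rd) (f : Rd -> R) (A : set Rd) : R :=
  fine (int_expmf f A) / fine (int_expmf f K).

Definition enlarge (K A : set Rd) (eps : R) : set Rd :=
  [set x | K x /\ (ereal_inf [set (dist2 x y)%:E | y in A] <= eps%:E)%E].

Definition finite_diameter (K : set Rd) : Prop :=
  exists D : R, forall x y, K x -> K y -> dist2 x y <= D.

(* restricted Cheeger constant C_f(V) =
   liminf_{eps -> 0+} inf_{A subset V, A measurable, mu_f(A) > 0}
        (mu_f(A_eps) - mu_f(A)) / (eps mu_f(A)) *)
Definition cheeger_ratio (K : set Rd) (f : Rd -> R) (V : set Rd) (eps : R)
  : \bar R :=
  ereal_inf [set ((mu_f K f (enlarge K A eps) - mu_f K f A)
                  / (eps * mu_f K f A))%:E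
            | A in [set A | A `<=` V /\ Lmeasurable A /\ 0 < mu_f K f A]].

Definition cheeger (K : set Rd) (f : Rd -> R) (V : set Rd) : \bar R :=
  ereal_sup [set ereal_inf [set cheeger_ratio K f V e | e in `]0%R, delta[]
            | delta in `]0%R, +oo[].

End Defs.

(* Since vol(V_e) < vol(K) for some e = rho > 0, some y in K lies at distance
   more than rho from V.  Let D bound the distances in K to y and t = eps/D.
   For A inside V, the homothety of centre y and ratio 1 - t maps A into A_eps
   (convexity), and its k-th iterate, k ~ D^2 / (rho eps), moves A off itself.
   Telescoping the volumes of the successive images gives
   (1 - t)^(k d) vol(A) <= k vol(A_eps \ A), i.e. vol(A_eps \ A) >= c eps vol(A)
   with c independent of eps and A.  As e^(-f) lies between e^(-M) and e^M on
   K, the same bound holds for mu_f up to the factor e^(-2M). *)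

From mathcomp Require Import all_boot all_order all_algebra.
From mathcomp Require Import all_classical all_reals all_analysis.
From mathcomp Require Import measurable_realfun.
From mathcomp Require Import ring lra.
Import Order.TTheory GRing.Theory Num.Theory.
Import numFieldNormedType.Exports.
Local Open Scope classical_set_scope.
Local Open Scope ring_scope.

Set Implicit Arguments. Unset Strict Implicit. Unset Printing Implicit Defensive.

Section outer_measure.
Context {R : realType} {d : nat}.
Local Notation Rd := 'rV[R]_d.

Lemma boxvol_ge0 (ab : option (Rd * Rd)) : 0 <= boxvol ab.
Proof.
by case: ab => [[a b]|] //=; apply: prodr_ge0 => i _; rewrite le_max lexx.
Qed.

Lemma vol_ge0 (A : set Rd) : (0 <= vol A)%E.
Proof.
apply: le_ereal_inf_tmp => _ [c _ <-].
by apply: nneseries_ge0 => n _ _; rewrite lee_fin boxvol_ge0.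
Qed.

Lemma le_vol (A B : set Rd) : A `<=` B -> (vol A <= vol B)%E.
Proof.
move=> AB; apply: ereal_inf_le_tmp => _ [c Bc <-].
by exists c => //; exact: subset_trans AB Bc.
Qed.

Lemma vol0 : vol (set0 : set Rd) = 0%E.
Proof.
apply/le_anti; rewrite vol_ge0 andbT.
by apply: ereal_inf_lbound; exists (fun _ => None) => //; rewrite eseries0.
Qed.

Lemma vol_setD_telescope (T : nat -> set Rd) (m : \bar R) :
  (forall j, Lmeasurable (T j)) -> (forall j, (vol (T j.+1 `\` T j) <= m)%E) ->
  forall k, (vol (T k `\` T 0%N) <= k%:R%:E * m)%E.
Proof.
move=> mT hm; have m0 : (0 <= m)%E := le_trans (vol_ge0 _) (hm 0%N).
elim=> [|k IH]; first by rewrite setDv mul0e vol0.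
rewrite (mT k (T k.+1 `\` T 0%N)) -natr1 EFinD ge0_muleDl ?mul1e ?lee_fin //.
by apply: leeD; [apply: le_trans IH; apply: le_vol => x [[]]|
                 apply: le_trans (hm k); apply: le_vol => x [[]]].
Qed.

Lemma coord_le_norm2 (v : Rd) i : `|v 0 i| <= norm2 v.
Proof.
rewrite /norm2 -sqrtr_sqr; apply: ler_wsqrtr.
by rewrite (bigD1 i) //= lerDl; apply: sumr_ge0 => j _; exact: sqr_ge0.
Qed.

Lemma bounded_vol_lt_pinfty (K : set Rd) (y : Rd) (D : R) :
  (forall x, K x -> dist2 x y <= D) -> (vol K < +oo)%E.
Proof.
move=> KD; pose cube : option (Rd * Rd) := Some (y - const_mx D, y + const_mx D).
apply: (@le_lt_trans _ _ (boxvol cube)%:E); last exact: ltry.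
apply: ereal_inf_lbound; exists (fun n => if n == 0%N then cube else None).
  move=> x Kx; exists 0%N => // i.
  have := le_trans (coord_le_norm2 (x - y) i) (KD x Kx).
  by rewrite !mxE ler_norml => /andP[? ?]; apply/andP; split; lra.
rewrite (nneseries_split _ 1); last by move=> k _; rewrite lee_fin boxvol_ge0.
by rewrite big_nat1 eseries0 ?adde0 // => -[].
Qed.

End outer_measure.

Section homothety.
Context {R : realType} {d : nat}.
Local Notation Rd := 'rV[R]_d.
Implicit Types (y x : Rd) (mu : R) (S : set Rd).

Definition homothety y mu x : Rd := y + mu *: (x - y).

Lemma homothetyE y mu x i : homothety y mu x 0 i = y 0 i + mu * (x 0 i - y 0 i).
Proof. by rewrite !mxE. Qed.

Lemma homothety_comp y a b x :
  homothety y a (homothety y b x) = homothety y (a * b) x.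
Proof. by apply/rowP => i; rewrite !homothetyE; ring. Qed.

Lemma homothety1 y x : homothety y 1 x = x.
Proof. by apply/rowP => i; rewrite !homothetyE; ring. Qed.

Lemma image_homothety1 y S : homothety y 1 @` S = S.
Proof. by apply: eq_image_id => x _; exact: homothety1. Qed.

Lemma homothetyK y mu : mu != 0 -> cancel (homothety y mu) (homothety y mu^-1).
Proof. by move=> mu0 x; rewrite homothety_comp mulVf // homothety1. Qed.

Lemma homothetyVK y mu : mu != 0 -> cancel (homothety y mu^-1) (homothety y mu).
Proof. by move=> mu0 x; rewrite homothety_comp mulfV // homothety1. Qed.

Lemma image_homothety y mu S :
  mu != 0 -> homothety y mu @` S = homothety y mu^-1 @^-1` S.
Proof.
move=> mu0; apply/seteqP; split => [_ [x Sx <-]|x Sx] /=.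
  by rewrite homothetyK.
by exists (homothety y mu^-1 x); rewrite ?homothetyVK.
Qed.

Definition homothety_box y mu (ab : option (Rd * Rd)) :=
  if ab is Some (a, b) then Some (homothety y mu a, homothety y mu b) else None.

Lemma box_homothety y mu ab x :
  0 < mu -> box ab x -> box (homothety_box y mu ab) (homothety y mu x).
Proof.
move=> mu0; case: ab => [[a b]|] //= abx i; rewrite !homothetyE.
have /andP[ax xb] := abx i.
by apply/andP; split; rewrite lerD2l ler_pM2l // lerD2r.
Qed.

Lemma boxvol_homothety y mu ab :
  0 < mu -> boxvol (homothety_box y mu ab) = mu ^+ d * boxvol ab.
Proof.
move=> mu0; case: ab => [[a b]|] /=; last by rewrite mulr0.
rewrite -[in mu ^+ d](card_ord d) -prodr_const -big_split /=.
apply: eq_bigr => i _; rewrite !homothetyE.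
have -> : y 0 i + mu * (b 0 i - y 0 i) - (y 0 i + mu * (a 0 i - y 0 i))
   = mu * (b 0 i - a 0 i) by ring.
by rewrite maxr_pMr ?ltW // mulr0.
Qed.

Lemma vol_homothety_le y mu S :
  0 < mu -> (vol (homothety y mu @` S) <= (mu ^+ d)%:E * vol S)%E.
Proof.
move=> mu0; have mud : 0 < mu ^+ d by rewrite exprn_gt0.
rewrite -lee_pdivrMl //; apply: le_ereal_inf_tmp => _ [c Sc <-].
rewrite lee_pdivrMl // -nneseriesZl => [|n _]; last by rewrite lee_fin boxvol_ge0.
apply: ereal_inf_lbound; exists (fun n => homothety_box y mu (c n)).
  move=> _ [x Sx <-]; have [n _ cnx] := Sc x Sx.
  by exists n => //; exact: box_homothety.
by apply: eq_eseriesr => n _; rewrite boxvol_homothety // EFinM.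
Qed.

Lemma image_homothetyK y mu S :
  mu != 0 -> homothety y mu^-1 @` (homothety y mu @` S) = S.
Proof.
by move=> mu0; rewrite image_comp; apply: eq_image_id => x _; exact: homothetyK.
Qed.

Lemma vol_homothety y mu S :
  0 < mu -> vol (homothety y mu @` S) = ((mu ^+ d)%:E * vol S)%E.
Proof.
move=> mu0; apply/le_anti; rewrite vol_homothety_le //=.
rewrite -lee_pdivlMl ?exprn_gt0 // -exprVn.
by rewrite -{1}(image_homothetyK y S (lt0r_neq0 mu0)) vol_homothety_le ?invr_gt0.
Qed.

Lemma Lmeasurable_homothety y mu A :
  0 < mu -> Lmeasurable A -> Lmeasurable (homothety y mu @` A).
Proof.
move=> mu0 mA X; have mu_neq0 := lt0r_neq0 mu0.
rewrite -[X](image_homothetyK y X (invr_neq0 mu_neq0)) invrK.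
set X' := homothety y mu^-1 @` X.
rewrite !image_homothety // preimage_setC -!preimage_setI -!image_homothety //.
by rewrite !(vol_homothety y _ mu0) (mA X') ge0_muleDr ?vol_ge0.
Qed.

Lemma convex_homothety (K : set Rd) y x mu :
  convex_set K -> K y -> K x -> 0 <= mu <= 1 -> K (homothety y mu x).
Proof.
move=> cK Ky Kx /andP[mu0 mu1].
have := cK x y (Itv01 mu0 mu1) (mem_set Kx) (mem_set Ky).
have -> : conv (Itv01 mu0 mu1) (x : convex_lmodType _) y = homothety y mu x.
  by apply/rowP => i; rewrite !mxE /= /unstable.onem; ring.
by move/set_mem.
Qed.

Lemma norm2Z mu (v : Rd) : norm2 (mu *: v) = `|mu| * norm2 v.
Proof.
rewrite /norm2 -sqrtr_sqr -sqrtrM ?sqr_ge0 // mulr_sumr.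
by congr Num.sqrt; apply: eq_bigr => i _; rewrite mxE exprMn.
Qed.

Lemma dist2xx x : dist2 x x = 0.
Proof.
by rewrite /dist2 subrr /norm2 big1 ?sqrtr0 // => i _; rewrite mxE expr0n.
Qed.

Lemma dist2C x x' : dist2 x x' = dist2 x' x.
Proof. by rewrite /dist2 -opprB -scaleN1r norm2Z normrN normr1 mul1r. Qed.

Lemma dist2_homothety_center y mu x :
  dist2 (homothety y mu x) y = `|mu| * dist2 x y.
Proof. by rewrite /dist2 /homothety addrC addKr norm2Z. Qed.

Lemma dist2_homothety_point y mu x :
  dist2 (homothety y mu x) x = `|mu - 1| * dist2 x y.
Proof.
by rewrite /dist2 -norm2Z; congr norm2; apply/rowP => i; rewrite !mxE; ring.
Qed.

End homothety.

Section onem_pow.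
Context {R : realType}.
Implicit Types (t : R) (n : nat).

Lemma onem_pow_le_expR t n : 0 <= t <= 1 -> (1 - t) ^+ n <= expR (- (n%:R * t)).
Proof.
move=> /andP[t0 t1]; rewrite -mulrN expRM_natl.
apply: lerXn2r; rewrite ?nnegrE ?expR_ge0 ?subr_ge0 //.
exact: expR_ge1Dx.
Qed.

Lemma expR_le_onem_pow t n :
  0 <= t <= 1 / 2 -> expR (- (n%:R * (2 * t))) <= (1 - t) ^+ n.
Proof.
move=> /andP[t0 t1]; rewrite -mulrN expRM_natl.
apply: lerXn2r; rewrite ?nnegrE ?expR_ge0 //; first lra.
rewrite expRN -div1r ler_pdivrMr ?expR_gt0 //.
by apply: le_trans (ler_wpM2l _ (expR_ge1Dx (2 * t))); nra.
Qed.

Lemma onem_pow_mulr_lt t n (D rho : R) : 0 < rho -> 0 <= D -> 0 <= t <= 1 ->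
  D / rho < n%:R * t -> (1 - t) ^+ n * D < rho.
Proof.
move=> rho0 D0 t01 Dnt.
apply: le_lt_trans (ler_wpM2r D0 (onem_pow_le_expR n t01)) _.
have expD_lt : expR (- (D / rho)) * D < rho.
  rewrite expRN mulrC ltr_pdivrMr ?expR_gt0 //.
  apply: lt_le_trans (ler_wpM2l (ltW rho0) (expR_ge1Dx (D / rho))).
  by rewrite mulrDr mulr1 mulrC divfK ?gt_eqF //; lra.
by apply: le_lt_trans expD_lt; rewrite ler_wpM2r // ler_expR lerN2 ltW.
Qed.

End onem_pow.

Section restricted_isoperimetry.
Context {R : realType} {d : nat}.
Local Notation Rd := 'rV[R]_d.

Lemma vol_homothety_shell (y : Rd) (lam : R) (k : nat) (A : set Rd) :
  0 < lam <= 1 -> Lmeasurable A -> homothety y (lam ^+ k) @` A `&` A = set0 ->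
  ((lam ^+ (k * d))%:E * vol A <= k%:R%:E * vol (homothety y lam @` A `\` A))%E.
Proof.
move=> /andP[lam0 lam1] mA disjA.
pose T j := homothety y (lam ^+ j) @` A.
have T0 : T 0%N = A by rewrite /T expr0 image_homothety1.
have T1 : T 1%N = homothety y lam @` A by rewrite /T expr1.
have mT j : Lmeasurable (T j) by exact/Lmeasurable_homothety/mA/exprn_gt0.
have T_step j : T j.+1 `\` T j `<=` homothety y (lam ^+ j) @` (T 1%N `\` A).
  move=> _ [[a Aa <-] notTj]; rewrite exprSr -homothety_comp T1.
  exists (homothety y lam a) => //; split; first by exists a.
  move=> Aa'; apply: notTj; exists (homothety y lam a) => //.
  by rewrite exprSr -homothety_comp.
have vol_step j : (vol (T j.+1 `\` T j) <= vol (T 1%N `\` A))%E.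
  apply: le_trans (le_vol (T_step j)) _; rewrite vol_homothety ?exprn_gt0 //.
  rewrite -[leRHS]mul1e lee_wpmul2r ?vol_ge0 // lee_fin -exprM.
  by rewrite exprn_ile1 // ltW.
have := vol_setD_telescope mT vol_step k.
have -> : T k `\` T 0%N = T k.
  by rewrite T0; exact: setDidl.
by rewrite T1 /T vol_homothety ?exprn_gt0 // -exprM.
Qed.

Variables (K : set Rd) (y : Rd) (rho D : R).
Hypotheses (convK : convex_set K) (Ky : K y) (rho_gt0 : 0 < rho) (D_gt0 : 0 < D)
  (K_le_D : forall x, K x -> dist2 x y <= D).

Lemma homothety_subset_enlarge (A : set Rd) (eps : R) :
  A `<=` K -> 0 <= eps <= D -> homothety y (1 - eps / D) @` A `<=` enlarge K A eps.
Proof.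
move=> AK /andP[eps0 epsD] _ [a Aa <-]; split.
  apply: convex_homothety => //; first exact: AK.
  by rewrite subr_ge0 ler_pdivrMr // mul1r epsD gerBl divr_ge0 // ltW.
apply: le_trans (ereal_inf_lbound _) _; first by exists a.
rewrite lee_fin dist2_homothety_point addrAC subrr add0r normrN.
rewrite ger0_norm ?divr_ge0 ?(ltW D_gt0) // mulrAC ler_pdivrMr //.
by apply: ler_wpM2l => //; exact/K_le_D/AK.
Qed.

Lemma homothety_far_disjoint (A : set Rd) (mu : R) :
  A `<=` K -> (forall a, A a -> rho < dist2 y a) -> 0 <= mu -> mu * D < rho ->
  homothety y mu @` A `&` A = set0.
Proof.
move=> AK Afar mu0 muD; apply/seteqP; split => // _ [[a Aa <-] /Afar].
rewrite dist2C dist2_homothety_center ger0_norm // => rho_lt.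
suff : mu * dist2 a y < rho by move/(lt_trans rho_lt); rewrite ltxx.
by apply: le_lt_trans muD; apply: ler_wpM2l => //; exact/K_le_D/AK.
Qed.

Lemma vol_enlarge_setD_ge_pow (A : set Rd) (eps : R) (k : nat) :
  A `<=` K -> Lmeasurable A -> (forall a, A a -> rho < dist2 y a) ->
  0 < eps < D -> D / rho < k%:R * (eps / D) ->
  (((1 - eps / D) ^+ (k * d))%:E * vol A <=
     k%:R%:E * vol (enlarge K A eps `\` A))%E.
Proof.
move=> AK mA Afar /andP[eps0 epsD] kt_gt.
have /andP[t_ge0 t_lt1] : 0 <= eps / D < 1.
  by rewrite divr_ge0 ?(ltW eps0) ?(ltW D_gt0) // ltr_pdivrMr // mul1r.
have disjA : homothety y ((1 - eps / D) ^+ k) @` A `&` A = set0.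
  apply: homothety_far_disjoint => //.
    by apply: exprn_ge0; rewrite subr_ge0 (ltW t_lt1).
  by apply: onem_pow_mulr_lt; rewrite ?(ltW D_gt0) ?t_ge0 ?(ltW t_lt1).
have lam_range : 0 < 1 - eps / D <= 1 by apply/andP; split; lra.
apply: le_trans (vol_homothety_shell lam_range mA disjA) _.
apply: lee_wpmul2l; first by rewrite lee_fin ler0n.
apply: le_vol => x [hx notA]; split => //.
by apply: homothety_subset_enlarge hx => //; rewrite (ltW eps0) (ltW epsD).
Qed.

Lemma vol_enlarge_setD_ge : exists2 c : R, 0 < c &
  forall (A : set Rd) (eps : R), A `<=` K -> Lmeasurable A ->
    (forall a, A a -> rho < dist2 y a) -> 0 < eps <= D / 2 ->
    ((c * eps)%:E * vol A <= vol (enlarge K A eps `\` A))%E.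
Proof.
pose B := D / rho + 1; have B_gt0 : 0 < B by rewrite ltr_wpDl ?divr_ge0 ?ltW.
pose L := expR (- (d%:R * (2 * B))).
exists (L / (B * D)) => [|A eps AK mA Afar /andP[eps0 epsD]].
  by rewrite divr_gt0 ?expR_gt0 ?mulr_gt0.
pose t := eps / D; have t_gt0 : 0 < t by rewrite divr_gt0.
have t_le : t <= 1 / 2 by rewrite ler_pdivrMr // mulrC mulrA mulr1.
pose k := (Num.truncn (D / rho / t)).+1.
have /andP[trunc_le trunc_gt] : (Num.truncn (D / rho / t))%:R <= D / rho / t < k%:R.
  by rewrite truncn_itv // !divr_ge0 ?ltW.
have kt_le : k%:R * t <= B.
  rewrite /k -natr1 mulrDl mul1r; apply: lerD; last lra.
  by rewrite -ler_pdivlMr.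
have shell : (((1 - t) ^+ (k * d))%:E * vol A <=
    k%:R%:E * vol (enlarge K A eps `\` A))%E.
  apply: vol_enlarge_setD_ge_pow => //; last by rewrite -ltr_pdivrMr.
  by apply/andP; split; lra.
have L_le : (L%:E <= ((1 - t) ^+ (k * d))%:E)%E.
  rewrite lee_fin; apply: le_trans (expR_le_onem_pow (k * d) _); last first.
    by apply/andP; split; lra.
  rewrite ler_expR lerN2 natrM.
  have -> : (k%:R * d%:R) * (2 * t) = d%:R * (2 * (k%:R * t)) by ring.
  by apply: ler_wpM2l => //; apply: ler_wpM2l.
have -> : L / (B * D) * eps = t / B * L by rewrite /t; field; rewrite !gt_eqF.
have tB_ge0 : (0 <= (t / B)%:E)%E by rewrite lee_fin divr_ge0 ?(ltW t_gt0) ?(ltW B_gt0).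
rewrite EFinM -muleA.
apply: le_trans (lee_wpmul2l tB_ge0 (le_trans (lee_wpmul2r (vol_ge0 A) L_le) shell)) _.
rewrite muleA -EFinM -[leRHS]mul1e lee_wpmul2r ?vol_ge0 // lee_fin.
by rewrite mulrAC ler_pdivrMr // mul1r mulrC.
Qed.

End restricted_isoperimetry.

Section layer_cake.
Context {R : realType} {d : nat}.
Local Notation Rd := 'rV[R]_d.
Local Notation leb := (@lebesgue_measure R).
Variable f : Rd -> R.
Implicit Types S : set Rd.

Definition superlevel_vol S (t : R) : \bar R := vol [set x | S x /\ t < expR (- f x)].

Lemma int_expmfE S :
  int_expmf f S = (\int[leb]_(t in `[0%R, +oo[) superlevel_vol S t)%E.
Proof. by []. Qed.

Lemma le_superlevel_vol S t : (superlevel_vol S t <= vol S)%E.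
Proof. by apply: le_vol => x []. Qed.

Lemma superlevel_vol_ge0 S t : (0 <= superlevel_vol S t)%E.
Proof. exact: vol_ge0. Qed.

Lemma measurable_superlevel_vol S :
  (vol S < +oo)%E -> measurable_fun (`[0%R, +oo[ : set R) (superlevel_vol S).
Proof.
move=> volS; have fin t : superlevel_vol S t \is a fin_num.
  by rewrite ge0_fin_numE ?superlevel_vol_ge0 // (le_lt_trans (le_superlevel_vol _ _)).
have -> : superlevel_vol S = EFin \o (fun t => fine (superlevel_vol S t)).
  by apply/funext => t /=; rewrite fineK.
apply/measurable_EFinP; apply: nonincreasing_measurable; first exact: measurable_itv.
move=> s t st; apply: fine_le; rewrite ?fin //.
by apply: le_vol => x [Sx tx]; split => //; exact: le_lt_trans st tx.
Qed.

Lemma int_expmf_ge0 S : (0 <= int_expmf f S)%E.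
Proof. by apply: integral_ge0 => t _; exact: vol_ge0. Qed.

Lemma integral_itv0_cst (a : R) (c : \bar R) : 0 < a ->
  (\int[leb]_(t in `[0%R, a[) c = a%:E * c)%E.
Proof.
move=> a0; rewrite integral_cst; last exact: measurable_itv.
rewrite muleC; congr (_ * _)%E; have := lebesgue_measure_itv `[0%R, a[.
by rewrite /= lte_fin a0 sube0 => <-.
Qed.

Lemma int_expmf_ge S (a : R) : 0 < a -> (vol S < +oo)%E ->
  (forall x, S x -> a <= expR (- f x)) -> (a%:E * vol S <= int_expmf f S)%E.
Proof.
move=> a0 volS Sa; rewrite int_expmfE -integral_itv0_cst //.
have sub : (`[0%R, a[ : set R) `<=` `[0%R, +oo[.
  by move=> t /=; rewrite !in_itv /= andbT => /andP[].
have mS := measurable_superlevel_vol volS.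
apply: le_trans _ (ge0_subset_integral leb (measurable_itv _) (measurable_itv _) mS
  (fun t _ => superlevel_vol_ge0 S t) sub).
apply: ge0_le_integral => //.
- by move=> t _; exact: vol_ge0.
- exact: measurable_funS (measurable_itv _) sub mS.
move=> t /=; rewrite in_itv /= => /andP[_ ta].
by apply: le_vol => x Sx; split => //; exact: lt_le_trans ta (Sa x Sx).
Qed.

Lemma int_expmf_le S (b : R) : 0 < b -> (vol S < +oo)%E ->
  (forall x, S x -> expR (- f x) <= b) -> (int_expmf f S <= b%:E * vol S)%E.
Proof.
move=> b0 volS Sb; rewrite int_expmfE -integral_itv0_cst //.
have splitU : `[0%R, +oo[%classic = `[0%R, b[%classic `|` `[b, +oo[%classic :> set R.
  by rewrite (@itv_bndbnd_setU _ _ _ (BLeft b)) // bnd_simp ltW.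
rewrite splitU integral_setU //; first last.
- apply: lt_disjoint => s t; rewrite !in_itv /= andbT => /andP[_ sb] bt.
  exact: lt_le_trans sb bt.
- by rewrite -splitU; exact: measurable_superlevel_vol.
rewrite [X in (_ + X)%E]integral0_eq ?adde0 => [|t /=]; last first.
  rewrite in_itv /= andbT => bt; rewrite /superlevel_vol -[RHS](@vol0 R d).
  congr vol; apply/seteqP; split => x // [Sx tx].
  by have := lt_le_trans tx (le_trans (Sb x Sx) bt); rewrite ltxx.
have sub : (`[0%R, b[ : set R) `<=` `[0%R, +oo[ by rewrite splitU; exact: subsetUl.
apply: ge0_le_integral => //.
- by move=> t _; exact: vol_ge0.
- exact: measurable_funS (measurable_itv _) sub (measurable_superlevel_vol volS).
- by move=> t _; exact: le_superlevel_vol.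
Qed.

Lemma int_expmf_split A B : A `<=` B -> Lmeasurable A -> (vol B < +oo)%E ->
  int_expmf f B = (int_expmf f A + int_expmf f (B `\` A))%E.
Proof.
move=> AB mA volB.
have volA : (vol A < +oo)%E by apply: le_lt_trans volB; exact: le_vol.
have volBA : (vol (B `\` A) < +oo)%E by apply: le_lt_trans volB; apply: le_vol => x [].
rewrite !int_expmfE -ge0_integralD //; last 4 first.
- by move=> t _; exact: superlevel_vol_ge0.
- exact: measurable_superlevel_vol.
- by move=> t _; exact: superlevel_vol_ge0.
- exact: measurable_superlevel_vol.
apply: eq_integral => t _.
rewrite /superlevel_vol (mA [set x | B x /\ t < expR (- f x)]).
congr (_ + _)%E; congr vol; apply/seteqP; split => x /=.
- by move=> [[]].
- by move=> [Ax tx]; split => //; split => //; exact: AB.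
- by move=> [[Bx tx] nA].
- by move=> [[Bx nA] tx].
Qed.

End layer_cake.

Section bounded_density.
Context {R : realType} {d : nat}.
Local Notation Rd := 'rV[R]_d.

Lemma subset_enlarge (K A : set Rd) (eps : R) :
  A `<=` K -> 0 <= eps -> A `<=` enlarge K A eps.
Proof.
move=> AK eps0 x Ax; split; first exact: AK.
apply: le_trans (ereal_inf_lbound _) _; first by exists x.
by rewrite dist2xx lee_fin.
Qed.

Variables (K : set Rd) (f : Rd -> R) (M : R).
Hypotheses (volK : (vol K < +oo)%E) (f_le_M : forall x, K x -> `|f x| <= M).

Let expf_ge x : K x -> expR (- M) <= expR (- f x).
Proof. by move=> /f_le_M; rewrite ler_norml ler_expR lerN2 => /andP[]. Qed.

Let expf_le x : K x -> expR (- f x) <= expR M.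
Proof. by move=> /f_le_M; rewrite ler_norml ler_expR lerNl => /andP[]. Qed.

Let vol_lt_pinfty S : S `<=` K -> (vol S < +oo)%E.
Proof. by move=> SK; exact: le_lt_trans (le_vol SK) volK. Qed.

Let vol_fin_num S : S `<=` K -> vol S \is a fin_num.
Proof. by move=> SK; rewrite ge0_fin_numE ?vol_ge0 ?vol_lt_pinfty. Qed.

Let int_expmf_ge_vol S : S `<=` K -> ((expR (- M))%:E * vol S <= int_expmf f S)%E.
Proof.
move=> SK; apply: int_expmf_ge (expR_gt0 _) (vol_lt_pinfty SK) _.
by move=> x /SK; exact: expf_ge.
Qed.

Let int_expmf_le_vol S : S `<=` K -> (int_expmf f S <= (expR M)%:E * vol S)%E.
Proof.
move=> SK; apply: int_expmf_le (expR_gt0 _) (vol_lt_pinfty SK) _.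
by move=> x /SK; exact: expf_le.
Qed.

Lemma int_expmf_fin_num S : S `<=` K -> int_expmf f S \is a fin_num.
Proof.
move=> SK; rewrite ge0_fin_numE ?int_expmf_ge0 //.
by apply: le_lt_trans (int_expmf_le_vol SK) _; rewrite -(fineK (vol_fin_num SK)) ltry.
Qed.

Lemma fine_int_expmf_ge S : S `<=` K ->
  expR (- M) * fine (vol S) <= fine (int_expmf f S).
Proof.
move=> SK; rewrite -lee_fin EFinM !fineK ?int_expmf_fin_num ?vol_fin_num //.
exact: int_expmf_ge_vol.
Qed.

Lemma fine_int_expmf_le S : S `<=` K ->
  fine (int_expmf f S) <= expR M * fine (vol S).
Proof.
move=> SK; rewrite -lee_fin EFinM !fineK ?int_expmf_fin_num ?vol_fin_num //.
exact: int_expmf_le_vol.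
Qed.

Lemma mu_f_setD A B : A `<=` B -> B `<=` K -> Lmeasurable A ->
  mu_f K f B - mu_f K f A = mu_f K f (B `\` A).
Proof.
move=> AB BK mA; have BAK : B `\` A `<=` K by move=> x [/BK].
rewrite /mu_f (int_expmf_split f AB mA (le_lt_trans (le_vol BK) volK)).
rewrite fineD ?int_expmf_fin_num //; last exact: subset_trans AB BK.
by rewrite mulrDl addrAC subrr add0r.
Qed.

Lemma cheeger_quotient_ge (A : set Rd) (eps c : R) :
  A `<=` K -> Lmeasurable A -> 0 < eps -> 0 <= c -> 0 < mu_f K f A ->
  ((c * eps)%:E * vol A <= vol (enlarge K A eps `\` A))%E ->
  expR (- M) / expR M * c <=
    (mu_f K f (enlarge K A eps) - mu_f K f A) / (eps * mu_f K f A).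
Proof.
move=> AK mA eps0 c0 muA shell.
have EK : enlarge K A eps `<=` K by move=> x [].
have EAK : enlarge K A eps `\` A `<=` K by move=> x [/EK].
rewrite mu_f_setD //; last exact: subset_enlarge AK (ltW eps0).
move: muA; rewrite /mu_f.
set a := fine (int_expmf f A); set z := fine (int_expmf f K).
set w := fine (int_expmf f (enlarge K A eps `\` A)) => muA.
have z_gt0 : 0 < z.
  rewrite lt0r fine_ge0 ?int_expmf_ge0 ?andbT //.
  by apply: contraTneq muA => ->; rewrite invr0 mulr0 ltxx.
have a_gt0 : 0 < a by move: muA; rewrite pmulr_lgt0 ?invr_gt0.
have -> : w / z / (eps * (a / z)) = w / (eps * a).
  by field; rewrite !gt_eqF.
have a_le : a <= expR M * fine (vol A) := fine_int_expmf_le AK.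
have w_ge : expR (- M) * fine (vol (enlarge K A eps `\` A)) <= w.
  exact: fine_int_expmf_ge EAK.
move: shell; rewrite -(fineK (vol_fin_num AK)) -(fineK (vol_fin_num EAK)).
rewrite -EFinM lee_fin => shell; rewrite ler_pdivlMr ?mulr_gt0 //.
have k_ge0 : 0 <= expR (- M) / expR M * c by rewrite mulr_ge0 ?divr_ge0 ?expR_ge0.
apply: le_trans (ler_wpM2l k_ge0 (ler_wpM2l (ltW eps0) a_le)) _.
rewrite (_ : _ * (eps * _) = expR (- M) * (c * eps * fine (vol A))); last first.
  by field; rewrite gt_eqF ?expR_gt0.
by apply: le_trans w_ge; apply: ler_wpM2l; rewrite ?expR_ge0.
Qed.

End bounded_density.

Section cheeger.
Context {R : realType} {d : nat}.
Local Notation Rd := 'rV[R]_d.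

Lemma le_cheeger (K V : set Rd) (f : Rd -> R) (b delta : R) : 0 < delta ->
  (forall (eps : R) (A : set Rd), 0 < eps < delta -> A `<=` V -> Lmeasurable A ->
     0 < mu_f K f A ->
     b <= (mu_f K f (enlarge K A eps) - mu_f K f A) / (eps * mu_f K f A)) ->
  (b%:E <= cheeger K f V)%E.
Proof.
move=> delta0 ratio_ge.
apply: (@le_trans _ _ (ereal_inf [set cheeger_ratio K f V e | e in `]0%R, delta[])).
  apply: le_ereal_inf_tmp => _ [eps + <-]; rewrite /= in_itv /= => eps_range.
  apply: le_ereal_inf_tmp => _ [A [AV [mA muA]] <-].
  by rewrite lee_fin ratio_ge.
by apply: ereal_sup_ubound; exists delta; rewrite //= in_itv /= andbT.
Qed.

Lemma enlarge_far_point (K V : set Rd) (e : R) : (vol (enlarge K V e) < vol K)%E ->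
  exists2 y, K y & forall v, V v -> e < dist2 y v.
Proof.
move=> vol_lt; have [y [Ky notEy]] : exists y, K y /\ ~ enlarge K V e y.
  apply: contrapT => notK; suff /le_vol : K `<=` enlarge K V e.
    by rewrite leNgt vol_lt.
  by move=> x Kx; apply: contrapT => notEx; apply: notK; exists x.
exists y => // v Vv; rewrite ltNge; apply/negP => yv_le; apply: notEy; split => //.
apply: le_trans (ereal_inf_lbound _) _; [by exists v|].
by rewrite lee_fin.
Qed.

End cheeger.

Theorem proposition4 (R : realType) (d : nat) (K V : set 'rV[R]_d)
  (f : 'rV[R]_d -> R) :
  convex_set K -> finite_diameter K ->
  V `<=` K -> Lmeasurable V ->
  (exists l : \bar R,
      (fun e : R => vol (enlarge K V e)) @ 0^'+ --> l /\ (l < vol K)%E) ->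
  (forall t : R, Lmeasurable [set x | K x /\ t < f x]) ->
  (exists M : R, forall x, K x -> `|f x| <= M) ->
  (0 < cheeger K f V)%E.
Proof.
move=> convK [D0 diamK] VK _ [l [vol_cvg l_lt]] _ [M f_le_M].
have [rho [rho_gt0 vol_lt]] : exists rho, 0 < rho /\ (vol (enlarge K V rho) < vol K)%E.
  apply: filter_ex (filterI (nbhs_right_gt 0) _).
  exact: vol_cvg _ (open_ereal_lt' l_lt).
have [y Ky V_far] := enlarge_far_point vol_lt.
pose D := `|D0| + 1; have D_gt0 : 0 < D by rewrite ltr_pwDr.
have K_le_D x : K x -> dist2 x y <= D.
  by move=> Kx; rewrite (le_trans (diamK _ _ Kx Ky)) // (le_trans (ler_norm D0)) ?lerDl.
have [c c_gt0 shell_ge] := vol_enlarge_setD_ge convK Ky rho_gt0 D_gt0 K_le_D.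
have volK := bounded_vol_lt_pinfty K_le_D.
apply: (@lt_le_trans _ _ (expR (- M) / expR M * c)%:E).
  by rewrite lte_fin !mulr_gt0 ?invr_gt0 ?expR_gt0.
apply: (le_cheeger (delta := D / 2)) => [|eps A /andP[eps_gt0 eps_lt] AV mA muA].
  by rewrite divr_gt0.
have AK := subset_trans AV VK.
apply: (cheeger_quotient_ge volK f_le_M AK mA eps_gt0 (ltW c_gt0) muA).
by apply: shell_ge => //; [move=> a /AV; exact: V_far | rewrite eps_gt0 (ltW eps_lt)].
Qed.
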